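(* Let $n$ be even, let $V$ be an $n$-dimensional $\mathbb{F}_2$-vector space, and let $h:V\to\mathbb{F}_2$ be a Maiorana–McFarland bent function which has a unique $\mathcal{M}$-subspace $\mathcal{W}$ of dimension $n/2$ such that every nontrivial $\mathcal{M}$-subspace $\mathcal{U}$ of $h$ satisfies $\mathcal{U}\subseteq\mathcal{W}$. Let $\widetilde{\mathcal{W}}$ be a subspace with $\mathcal{W}\cap\widetilde{\mathcal{W}}=\{0\}$ and $\mathcal{W}+\widetilde{\mathcal{W}}=V$, and let $L$ be a linear permutation of $V$ with $L(\widetilde{\mathcal{W}})=\mathcal{W}$. Let $k$ be a positive integer, $V_0=\{z\in\mathbb{F}_{2^k}:{\rm Tr}_1^k(z)=0\}$, and for $z\in\mathbb{F}_{2^k}$ put $f^{(z)}=h$ if $z\in V_0$ and $f^{(z)}=h\circ L$ if $z\notin V_0$. If $n>2k+4$, then the function $f:V\times\mathbb{F}_{2^k}\times\mathbb{F}_{2^k}\to\mathbb{F}_2$, $f(x,y,z)=f^{(z)}(x)+{\rm Tr}_1^k(yz)$, is not (EA-equivalent to) a Maiorana–McFarland function, i.e. $f\notin MM^{\#}$; equivalently, every $\mathcal{M}$-subspace $\mathcal{U}$ of $f$ satisfies $\dim\mathcal{U}<n/2+k$.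
   Context: ${\rm Tr}_1^k$ is the absolute trace of $\mathbb{F}_{2^k}$. For a Boolean function $g$ on an $\mathbb{F}_2$-space $X$, $D_aD_bg(x)=g(x)+g(x+a)+g(x+b)+g(x+a+b)$. A subspace $\mathcal{U}\subseteq X$ is an $\mathcal{M}$-subspace of $g$ if $D_aD_bg(x)=0$ for all $a,b\in\mathcal{U}$ and all $x\in X$; it is nontrivial if its dimension is at least $2$. A Boolean function $g$ on $X$ is bent if all its Walsh values $\sum_x(-1)^{g(x)+\langle b,x\rangle}$ have absolute value $2^{\dim X/2}$. Two Boolean functions $f,g$ on $X$ are EA-equivalent if $g(x)=f(L'(x)+a)+\langle c,x\rangle+b$ with $L'$ a linear permutation of $X$, $a,c\in X$, $b\in\mathbb{F}_2$. The Maiorana–McFarland class on $\mathbb{F}_{2^N}\times\mathbb{F}_{2^N}$ consists of functions ${\rm Tr}_1^N(x\pi(y))+g(y)$ with $\pi$ a permutation of $\mathbb{F}_{2^N}$; $MM^{\#}$ is the set of Boolean functions on a $2N$-dimensional $\mathbb{F}_2$-space EA-equivalent (after a linear identification of the space with $\mathbb{F}_{2^N}^2$) to such a function. A bent function on a $2N$-dimensional space is a Maiorana–McFarland bent function (lies in $MM^{\#}$) iff it has an $\mathcal{M}$-subspace of dimension $N$. *)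

From HB Require Import structures.
From mathcomp Require Import all_boot all_order all_algebra all_field.
Set Implicit Arguments. Unset Strict Implicit. Unset Printing Implicit Defensive.
Import GRing.Theory Num.Theory.
Local Open Scope ring_scope.

Definition D2 (X : zmodType) (g : X -> 'F_2) (a b x : X) : 'F_2 :=
  g x + g (x + a) + g (x + b) + g (x + a + b).

Definition Msubspace (X : vectType 'F_2) (g : X -> 'F_2) (U : {vspace X}) : Prop :=
  forall a b, a \in U -> b \in U -> forall x, D2 g a b x = 0.

Definition dotF2 (n : nat) (b x : 'rV['F_2]_n) : 'F_2 := (x *m b^T) 0 0.

Definition sgnF2 (e : 'F_2) : int := if e == 0 then 1 else -1.

Definition walsh (n : nat) (g : 'rV['F_2]_n -> 'F_2) (b : 'rV['F_2]_n) : int :=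
  \sum_(x : 'rV['F_2]_n) sgnF2 (g x + dotF2 b x).

Definition bent (n : nat) (g : 'rV['F_2]_n -> 'F_2) : Prop :=
  forall b, `|walsh g b| = (2 ^ n./2)%:Z.

Definition absTr (K : fieldExtType 'F_2) (z : K) : K :=
  \sum_(i < \dim {:K}) z ^+ (2 ^ i).

(* The trace viewed as an F_2-valued (Boolean) function: Tr takes values in {0,1}. *)
Definition absTrF2 (K : fieldExtType 'F_2) (z : K) : 'F_2 :=
  if absTr z == 0 then 0 else 1.

Definition fconstr (n : nat) (K : fieldExtType 'F_2)
  (h : 'rV['F_2]_n -> 'F_2) (L : 'rV['F_2]_n -> 'rV['F_2]_n)
  (p : 'rV['F_2]_n * K * K) : 'F_2 :=
  let: (x, y, z) := p in
  (if absTr z == 0 then h x else h (L x)) + absTrF2 (y * z).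

From HB Require Import structures.
From mathcomp Require Import all_boot all_order all_algebra all_field zify.
Import GRing.Theory Num.Theory.
Local Open Scope ring_scope.

(* Suppose U is an M-subspace of f with dim U >= n/2 + k.  The subspace
   P = {x | (x, 0, 0) \in U} has dimension at least dim U - 2k >= 2.
   Restricting f to the slices {(x, 0, 0)} and {(x, 0, z0)} with Tr z0 <> 0
   (such z0 exists because the trace polynomial has degree 2^(k-1) < 2^k)
   shows that P is an M-subspace of both h and h o L, so P and L(P) are
   nontrivial M-subspaces of h.  Both lie in W = L(Wt), hence P lies in W and
   in Wt, which meet only in 0. *)

Lemma exists_nonroot (F : finFieldType) (K : fieldExtType F) (p : {poly K}) :
  p != 0 -> (size p <= #|F| ^ \dim {:K})%N -> exists z, ~~ root p z.
Proof.
move=> p_neq0 size_p; pose T := finvect_type K.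
have cardT_K : #|T| = (#|F| ^ \dim {:K})%N.
  by rewrite -(card_vspace (fullv : {vspace T})) card_vspacef.
case: (pickP (fun z : T => ~~ root p z)) => [z|all_roots]; first by exists z.
suff : (#|T| < size p)%N by rewrite cardT_K ltnNge size_p.
rewrite cardT; apply: max_poly_roots p_neq0 _ (enum_uniq T).
by apply/allP=> z _; apply/negbFE/all_roots.
Qed.

Section AbsoluteTrace.

Variable K : fieldExtType 'F_2.
Hypothesis dimK_gt0 : (0 < \dim {:K})%N.

Lemma absTr0 : absTr (0 : K) = 0.
Proof. by rewrite /absTr big1 // => i _; rewrite expr0n expn_eq0. Qed.

Definition tracePoly : {poly K} := \sum_(i < \dim {:K}) 'X^(2 ^ i).

Lemma horner_tracePoly z : tracePoly.[z] = absTr z.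
Proof. by rewrite horner_sum; apply: eq_bigr => i _; rewrite hornerXn. Qed.

Lemma coef1_tracePoly : tracePoly`_1 = 1.
Proof.
rewrite coef_sum (bigD1 (Ordinal dimK_gt0)) //= coefXn expn0 eqxx big1 ?addr0 //.
move=> i /eqP i_neq0; rewrite coefXn; case: eqP => // one_eq_exp.
by case: i_neq0; apply/val_inj/eqP; rewrite /= -(eqn_exp2l _ _ (ltnSn 1)) -one_eq_exp.
Qed.

Lemma size_tracePoly : (size tracePoly <= 2 ^ \dim {:K})%N.
Proof.
apply: leq_trans (size_sum _ _ _) _; apply/bigmax_leqP => i _.
by rewrite size_polyXn ltn_exp2l.
Qed.

Lemma absTr_neq0 : exists z : K, absTr z != 0.
Proof.
have tracePoly_neq0 : tracePoly != 0.
  apply/negP=> /eqP tr0; have := @oner_neq0 K.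
  by rewrite -coef1_tracePoly tr0 coef0 eqxx.
have [|z] := exists_nonroot _ _ _ tracePoly_neq0; first by rewrite card_Fp ?size_tracePoly.
by rewrite /root horner_tracePoly; exists z.
Qed.

End AbsoluteTrace.

Lemma Msubspace_lpreim (X Y : vectType 'F_2) (A : 'Hom(X, Y)) (c : Y)
    (g : Y -> 'F_2) (g' : X -> 'F_2) (U : {vspace Y}) :
  (forall x, g' x = g (c + A x)) -> Msubspace g U -> Msubspace g' (A @^-1: U).
Proof.
move=> g'E MgU a b; rewrite -!memv_preim => Ua Ub x.
by rewrite /D2 !g'E !linearD !addrA -(MgU _ _ Ua Ub (c + A x)).
Qed.

Lemma Msubspace_limg (X Y : vectType 'F_2) (A : 'Hom(X, Y)) (g : Y -> 'F_2)
    (U : {vspace X}) :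
  (forall y, exists x, A x = y) -> Msubspace (g \o A) U -> Msubspace g (A @: U).
Proof.
move=> A_surj MgAU _ _ /memv_imgP[a Ua ->] /memv_imgP[b Ub ->] y.
have [x <-] := A_surj y.
by rewrite -(MgAU _ _ Ua Ub x) /D2 /= !linearD.
Qed.

Lemma dim_lpreim_ker0 (F : fieldType) (X Y : vectType F) (A : 'Hom(X, Y))
    (U : {vspace Y}) :
  lker A == 0%VS -> (\dim U + \dim {:X} <= \dim (A @^-1: U) + \dim {:Y})%N.
Proof.
move=> /eqP kerA0.
have dim_img V : \dim (A @: V) = \dim V by rewrite limg_dim_eq // kerA0 capv0.
have <- : \dim (U :&: limg A) = \dim (A @^-1: U).
  by rewrite -dim_img -lpreim_cap_limg lpreimK ?capvSr.
rewrite -(dim_img fullv) -dimv_sum_cap addnC leq_add2l.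
exact/dimvS/subvf.
Qed.

Lemma dimvf_pair (F : fieldType) (X Y : vectType F) :
  \dim {:(X * Y)%type} = (\dim {:X} + \dim {:Y})%N.
Proof. by rewrite !dimvf. Qed.

Section FirstFactor.

Variables (F : fieldType) (V Y Z : vectType F).

Definition in_fst3 (x : V) : V * Y * Z := (x, 0, 0).

Fact in_fst3_is_linear : linear in_fst3.
Proof. by move=> a u v; congr (_, _, _); rewrite /= ?scaler0 ?addr0. Qed.

HB.instance Definition _ :=
  GRing.isLinear.Build F V (V * Y * Z)%type _ in_fst3 in_fst3_is_linear.

Lemma lker_in_fst3 : lker (linfun in_fst3) == 0%VS.
Proof. by apply/lker0P => x y; rewrite !lfunE => -[]. Qed.

End FirstFactor.

Arguments in_fst3 {F V Y Z}.
Arguments lker_in_fst3 {F V Y Z}.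

Lemma fconstr_slice (n : nat) (K : fieldExtType 'F_2) (h : 'rV['F_2]_n -> 'F_2)
    (L : 'rV['F_2]_n -> 'rV['F_2]_n) (x : 'rV['F_2]_n) (z : K) :
  fconstr h L (x, 0, z) = if absTr z == 0 then h x else h (L x).
Proof. by rewrite /fconstr mul0r /absTrF2 absTr0 eqxx addr0. Qed.

Theorem proposition3p4
  (n k : nat) (K : fieldExtType 'F_2)
  (h : 'rV['F_2]_n -> 'F_2)
  (W Wt : {vspace 'rV['F_2]_n})
  (L : 'End('rV['F_2]_n)) :
  ~~ odd n ->
  (* h is a Maiorana-McFarland bent function with M-subspace W of dimension n/2 *)
  bent h ->
  Msubspace h W -> \dim W = n./2 ->
  (* W is the unique M-subspace of dimension n/2 *)
  (forall U : {vspace 'rV['F_2]_n}, Msubspace h U -> \dim U = n./2 -> U = W) ->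
  (* every nontrivial M-subspace of h is contained in W *)
  (forall U : {vspace 'rV['F_2]_n}, Msubspace h U -> (2 <= \dim U)%N -> (U <= W)%VS) ->
  (* Wt is a complement of W *)
  (W :&: Wt)%VS = 0%VS -> (W + Wt)%VS = fullv ->
  (* L is a linear permutation with L(Wt) = W *)
  bijective L -> (L @: Wt)%VS = W ->
  (* K = F_{2^k}, k > 0 *)
  (0 < k)%N -> \dim {:K} = k ->
  (2 * k + 4 < n)%N ->
  forall U : {vspace ('rV['F_2]_n * K * K)},
    Msubspace (fconstr h L) U -> (\dim U < n./2 + k)%N.
Proof.
move=> _ _ _ _ _ sub_W W_Wt_0 _ [L' L'K LK'] LWt_W k_gt0 dimK n_large U MU.
rewrite ltnNge; apply/negP => dimU.
pose P := (linfun (in_fst3 : 'rV_n -> 'rV_n * K * K) @^-1: U)%VS.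
have M_P (z : K) (g : 'rV_n -> 'F_2) :
    (forall x, g x = if absTr z == 0 then h x else h (L x)) -> Msubspace g P.
  move=> gE; apply: (@Msubspace_lpreim _ _ _ (0, 0, z)) MU => x; rewrite lfunE.
  have -> : (0, 0, z) + in_fst3 x = (x, 0, z) :> 'rV_n * K * K.
    by congr (_, _, _); rewrite /= ?add0r ?addr0.
  by rewrite gE fconstr_slice.
have M_hP : Msubspace h P by apply: (M_P 0) => x; rewrite absTr0 eqxx.
have [z0 trz0] : exists z : K, absTr z != 0 by apply: absTr_neq0; rewrite dimK.
have M_hLP : Msubspace h (L @: P).
  apply: Msubspace_limg => [y|]; first by exists (L' y).
  by apply: (M_P z0) => x; rewrite (negbTE trz0).
have kerL0 : lker L == 0%VS by apply/lker0P/(can_inj L'K).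
have dimP : (2 <= \dim P)%N.
  have := dim_lpreim_ker0 _ _ _ _ U lker_in_fst3.
  rewrite -/P !dimvf_pair !dimvf dim_matrix mul1r -dimvf dimK; lia.
have P_Wt : (P <= Wt)%VS.
  rewrite -(limg_ker0 _ _ kerL0) LWt_W; apply: sub_W M_hLP _.
  by rewrite limg_dim_eq // (eqP kerL0) capv0.
have /eqP P0 : P == 0%VS by rewrite -subv0 -W_Wt_0 subv_cap P_Wt sub_W.
by move: dimP; rewrite P0 dimv0.
Qed.
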